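(* For the public-key scheme $\mathsf{FrodoPKE}$ with secret key $\mathbf S\in\mathbb Z_q^{n\times\bar n}$, there exists a quantum algorithm that makes one quantum query to $\mathsf{FrodoPKE}.\mathsf{Dec}_{\mathbf S}$ and recovers any choice of $\bar m$ of the $\bar n$ columns of $\mathbf S$. For each of the chosen columns, if that column has at least one odd entry, then the algorithm succeeds in recovering that column with probability at least $4/\pi^2$.
   Context: $\mathsf{FrodoPKE}$ with integer parameters $n,\bar m,\bar n$, modulus $q\ge2$ a power of $2$, number $B$ of encoded bits per entry, and discrete symmetric error distribution $\chi$: $\mathsf{KeyGen}$ samples uniform $\mathbf A\in\mathbb Z_q^{n\times n}$ and $\mathbf S,\mathbf E\leftarrow\chi$ in $\mathbb Z_q^{n\times\bar n}$, sets $\mathbf B=\mathbf A\mathbf S+\mathbf E$, public key $(\mathbf A,\mathbf B)$, secret key $\mathbf S$. Encryption of $\mathbf m\in\{0,1\}^{B\bar m\bar n}$, encoded as $\mathbf M\in\mathbb Z_q^{\bar m\times\bar n}$ whose entries are zero outside their $B$ most significant bits, samples $\mathbf S',\mathbf E'\leftarrow\chi$ in $\mathbb Z_q^{\bar m\times n}$, $\mathbf E''\leftarrow\chi$ in $\mathbb Z_q^{\bar m\times\bar n}$ and outputs $(\mathbf C_1,\mathbf C_2)=(\mathbf S'\mathbf A+\mathbf E',\mathbf M+\mathbf S'\mathbf B+\mathbf E'')$. $\mathsf{Dec}_{\mathbf S}(\mathbf C_1,\mathbf C_2)$ for $(\mathbf C_1,\mathbf C_2)\in\mathbb Z_q^{\bar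 m\times n}\times\mathbb Z_q^{\bar m\times\bar n}$ computes $\mathbf M=\mathbf C_2-\mathbf C_1\mathbf S$ and outputs, for each $(i,j)\in[\bar m]\times[\bar n]$, the integer in $\mathbb Z_{2^B}$ given by the $B$ most significant bits of $M_{i,j}$. A quantum query to $\mathsf{Dec}_{\mathbf S}$ means one application, on arbitrary superpositions of ciphertexts, of the unitary that maps $|\mathbf C_1,\mathbf C_2\rangle\bigotimes_{i,j}|z_{i,j}\rangle$ ($z_{i,j}\in\mathbb Z_{2^B}$) to $|\mathbf C_1,\mathbf C_2\rangle\bigotimes_{i,j}|z_{i,j}+\mathsf{Dec}_{\mathbf S}(\mathbf C_1,\mathbf C_2)_{i,j}\bmod 2^B\rangle$. *)

From HB Require Import structures.
From mathcomp Require Import all_boot all_order all_algebra.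
From mathcomp Require Import reals trigo.
From mathcomp Require Import complex.
Set Implicit Arguments. Unset Strict Implicit. Unset Printing Implicit Defensive.
Import Order.TTheory GRing.Theory Num.Theory.
Local Open Scope ring_scope.

Definition msb (k B : nat) (x : 'Z_(2^k)) : 'Z_(2^B) :=
  inZp (val x %/ 2 ^ (k - B))%N.

Definition frodo_dec (k B mbar n nbar : nat) (S : 'M['Z_(2^k)]_(n, nbar))
  (C1 : 'M['Z_(2^k)]_(mbar, n)) (C2 : 'M['Z_(2^k)]_(mbar, nbar))
  : 'M['Z_(2^B)]_(mbar, nbar) :=
  map_mx (@msb k B) (C2 - C1 *m S).

(* Computational basis of the algorithm's register: ciphertext register (C1, C2),
   answer register (z_{i,j}) and an arbitrary finite workspace W. *)
Definition basis (k B mbar n nbar : nat) (W : finType) : finType :=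
  ('M['Z_(2^k)]_(mbar, n) * 'M['Z_(2^k)]_(mbar, nbar)
    * 'M['Z_(2^B)]_(mbar, nbar) * W)%type.

Definition qstate (R : realType) (T : finType) := T -> R[i].

Definition sqnorm (R : realType) (x : R[i]) : R := complex.Re x ^+ 2 + complex.Im x ^+ 2.

Definition unit_vector (R : realType) (T : finType) (psi : qstate R T) : Prop :=
  \sum_(x : T) sqnorm (psi x) = 1.

(* A linear operator given by its matrix U x y = <x|U|y>. *)
Definition apply_op (R : realType) (T : finType) (U : T -> T -> R[i])
  (psi : qstate R T) : qstate R T :=
  fun x => \sum_(y : T) U x y * psi y.

(* U is unitary (on a finite-dimensional space, U^* U = I suffices). *)
Definition unitary (R : realType) (T : finType) (U : T -> T -> R[i]) : Prop :=
  forall y y' : T, \sum_(x : T) (conjc (U x y)) * U x y' = (y == y')%:R.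

(* One quantum query to Dec_S (tensored with identity on the workspace):
   |C1,C2>|z>|w>  |->  |C1,C2>|z + Dec_S(C1,C2)>|w>  (entrywise mod 2^B). *)
Definition dec_oracle (R : realType) (k B mbar n nbar : nat) (W : finType)
  (S : 'M['Z_(2^k)]_(n, nbar)) (psi : qstate R (basis k B mbar n nbar W))
  : qstate R (basis k B mbar n nbar W) :=
  fun x => let: (C1, C2, z, w) := x in
           psi (C1, C2, z - @frodo_dec k B mbar n nbar S C1 C2, w).

Definition meas_prob (R : realType) (T : finType) (phi : qstate R T) (P : pred T) : R :=
  \sum_(x : T | P x) sqnorm (phi x).

From Pilot Require Import Defs.
From HB Require Import structures.
From mathcomp Require Import all_boot all_order all_algebra.
From mathcomp Require Import reals topology normedtype derive trigo.
From mathcomp Require Import complex.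
From mathcomp Require Import ring lra.
Import Pilot.Defs.
Import Order.TTheory GRing.Theory Num.Theory numFieldNormedType.Exports.
Set Implicit Arguments. Unset Strict Implicit. Unset Printing Implicit Defensive.
Local Open Scope ring_scope.
Local Open Scope complex_scope.

(* In every entry (a, cols a) of the answer register put the Fourier state
   sum_z e(-z/2^B)|z>, and in the ciphertext register the uniform superposition of
   all C1 with C2 = 0.  One decryption query then only multiplies |C1> by the phases
   e(msb(-(C1 S)_(a, cols a))/2^B), and the Fourier transform over Z_q of the C1
   register leaves row a in the state whose amplitude at d is the Fourier coefficient
   at d of c |-> e(msb(-c s_a)/2^B), s_a being column cols a of S.  If s_a has an odd,
   hence invertible, entry then c s_a is uniform on Z_q, so the coefficient at s_a^T
   is proportional to the geometric sum  sum_y e(y/q) e(msb(-y)/2^B), whose modulus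
   2^B sin(pi/2^B) / sin(pi/q) is at least 2q/pi.  Reading s_a^T therefore has
   probability at least 4/pi^2. *)

Section Sine.
Variable R : realType.

Lemma sin_le (x : R) : 0 <= x -> sin x <= x.
Proof.
move=> x0.
have [c _] : exists2 c, c \in `[0, x]%R & sin x - sin 0 = cos c * (x - 0).
  apply: MVT_segment => //.
  exact/continuous_subspaceT/continuous_sin.
rewrite sin0 !subr0 => ->.
by rewrite ler_piMl // cos_le1.
Qed.

(* [2^B sin (pi / 2^B)] is nondecreasing in [B], since [sin 2x <= 2 sin x] on [0, pi]. *)
Lemma exp2n_sin_pi_div_ge2 (B : nat) :
  (0 < B)%N -> 2 <= (2 ^ B)%:R * sin (pi / (2 ^ B)%:R) :> R.
Proof.
elim: B => // -[_ _|B IH _].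
  by rewrite expn1 sin_pihalf mulr1.
set x := pi / (2 ^ B.+2)%:R.
have x_ge0 : 0 <= x by rewrite divr_ge0 ?pi_ge0.
have x_le_pi : x <= pi.
  by rewrite ler_pdivrMr ?ltr0n ?expn_gt0 // ler_peMr ?pi_ge0 // ler1n expn_gt0.
have sinx_ge0 : 0 <= sin x by apply: sin_ge0_pi; rewrite x_ge0.
have halve : pi / (2 ^ B.+1)%:R = x *+ 2.
  have ? : (2 ^ B.+1)%:R != 0 :> R by rewrite pnatr_eq0 expn_eq0.
  by rewrite /x [in RHS]expnS natrM -mulr_natr; field.
have := IH isT; rewrite halve sin_mulr2n.
have -> : (2 ^ B.+2)%:R = (2 ^ B.+1)%:R * 2 :> R by rewrite expnS natrM mulrC.
have : 0 <= (2 ^ B.+1)%:R * sin x * (1 - cos x).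
  by rewrite !mulr_ge0 // subr_ge0 cos_le1.
rewrite -mulr_natr; nra.
Qed.

End Sine.

Lemma card_gt0_natr (R : numDomainType) (X : finType) (x : X) : (0 : R) < #|X|%:R.
Proof. by rewrite ltr0n; apply/card_gt0P; exists x. Qed.

Section SquaredNorm.
Variable R : realType.
Implicit Types (x y : R[i]) (r : R).

Lemma conjcM x y : (x * y)^* = x^* * y^*.
Proof. exact: rmorphM. Qed.

Lemma conjc_realM r x : (r%:C * x)^* = r%:C * x^*.
Proof. by case: x => a b; simpc. Qed.

Lemma sqnormE x : (sqnorm x)%:C = x * x^*.
Proof. by rewrite /sqnorm add_Re2_Im2 sqr_normc. Qed.

Lemma sqnorm_ge0 x : 0 <= sqnorm x.
Proof. by rewrite /sqnorm addr_ge0 ?sqr_ge0. Qed.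

Lemma sqnormM x y : sqnorm (x * y) = sqnorm x * sqnorm y.
Proof. by case: x => a b; case: y => c d; rewrite /sqnorm /=; ring. Qed.

Lemma sqnormJ x : sqnorm x^* = sqnorm x.
Proof. by case: x => a b; rewrite /sqnorm /= sqrrN. Qed.

Lemma sqnormC r : sqnorm r%:C = r ^+ 2.
Proof. by rewrite /sqnorm /= expr0n addr0. Qed.

Lemma sqnorm_natr (m : nat) : sqnorm m%:R = m%:R ^+ 2 :> R.
Proof. by rewrite -(rmorph_nat (real_complex R)) sqnormC. Qed.

Lemma sqnorm_bool (b : bool) : sqnorm (b%:R : R[i]) = b%:R.
Proof. by case: b; rewrite sqnorm_natr ?expr1n ?expr0n. Qed.

Lemma sqnormMn x (m : nat) : sqnorm (x *+ m) = sqnorm x * m%:R ^+ 2.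
Proof. by rewrite -[x *+ m]mulr_natr sqnormM sqnorm_natr. Qed.

Lemma sqnorm_prod (I : finType) (F : I -> R[i]) :
  sqnorm (\prod_i F i) = \prod_i sqnorm (F i).
Proof.
elim/big_rec2: _ => [|i a b _ <-]; last by rewrite sqnormM.
by rewrite -(rmorph1 (real_complex R)) sqnormC expr1n.
Qed.

Lemma unitary_sqnorm (T : finType) (U : T -> T -> R[i]) (v : qstate R T) :
  unitary U -> \sum_x sqnorm (apply_op U v x) = \sum_x sqnorm (v x).
Proof.
move=> U_unitary; apply: complexI; rewrite !rmorph_sum /=.
under eq_bigr => x _ do rewrite sqnormE /apply_op rmorph_sum mulr_suml.
under eq_bigr => x _ do under eq_bigr => y _ do rewrite mulr_sumr.
rewrite exchange_big /=.
under eq_bigr => y _ do rewrite exchange_big /=.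
apply: eq_bigr => y _; rewrite sqnormE.
transitivity (\sum_y' v y * (v y')^* * \sum_x ((U x y')^* * U x y)).
  apply: eq_bigr => y' _; rewrite mulr_sumr; apply: eq_bigr => x _.
  by rewrite rmorphM /=; ring.
under eq_bigr => y' _ do rewrite U_unitary.
rewrite (bigD1 y) //= eqxx mulr1 big1 ?addr0 // => y' /negbTE.
by rewrite eq_sym => ->; rewrite mulr0.
Qed.

End SquaredNorm.

Section ComplexExponential.
Variable R : realType.
Implicit Types (s t : R).

Definition expi t : R[i] := cos t +i* sin t.

Lemma expiD s t : expi (s + t) = expi s * expi t.
Proof. by rewrite /expi cosD sinD; simpc; congr (_ +i* _); ring. Qed.

Lemma expi0 : expi 0 = 1.
Proof. by rewrite /expi cos0 sin0. Qed.

Lemma expi_2pi_muln (m : nat) : expi (pi *+ 2 *+ m) = 1.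
Proof.
elim: m => [|m IH]; first by rewrite mulr0n expi0.
by rewrite mulrSr expiD IH mul1r /expi cos2pi sin2pi.
Qed.

Lemma sqnorm_expi t : sqnorm (expi t) = 1.
Proof. by rewrite /sqnorm /= cos2Dsin2. Qed.

Lemma expiJ t : (expi t)^* * expi t = 1.
Proof. by rewrite mulrC -sqnormE sqnorm_expi. Qed.

Lemma sqnorm_expi_sub1 t : sqnorm (expi t - 1) = 4 * sin (t / 2) ^+ 2.
Proof.
set h := t / 2.
have -> : t = h *+ 2 by rewrite -mulr_natr divfK ?pnatr_eq0.
rewrite /sqnorm /expi /= subr0 cos_mulr2n sin_mulr2n.
have := cos2Dsin2 h; nra.
Qed.

Lemma expi_neq1 t : 0 < t < pi *+ 2 -> expi t != 1.
Proof.
case/andP=> t_gt0 t_lt2pi; rewrite -subr_eq0; apply/eqP => expi_eq1.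
have : 0 < sin (t / 2).
  by apply: sin_gt0_pi; rewrite divr_gt0 //= ltr_pdivrMr // mulr_natr.
have := sqnorm_expi_sub1 t; rewrite expi_eq1 /sqnorm /= expr0n /= addr0.
nra.
Qed.

End ComplexExponential.

Section RootsOfUnity.
Variable R : realType.
Implicit Types (p a b : nat).

Definition efrac p a : R[i] := expi (pi *+ 2 * a%:R / p%:R).

Lemma efracD p a b : efrac p (a + b) = efrac p a * efrac p b.
Proof. by rewrite /efrac -expiD natrD mulrDr mulrDl. Qed.

Lemma efrac0 p : efrac p 0 = 1.
Proof. by rewrite /efrac mulr0 mul0r expi0. Qed.

Lemma efracX p a : efrac p a = efrac p 1 ^+ a.
Proof. by elim: a => [|a IH]; rewrite ?efrac0 // -addn1 efracD IH exprD expr1. Qed.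

Lemma efrac_mull p d : (0 < p)%N -> efrac p (d * p) = 1.
Proof.
move=> p_gt0; rewrite /efrac natrM mulrA mulfK ?pnatr_eq0 -?lt0n //.
by rewrite mulr_natr expi_2pi_muln.
Qed.

Lemma efrac_modn p a : (0 < p)%N -> efrac p (a %% p) = efrac p a.
Proof. by move=> p_gt0; rewrite [in RHS](divn_eq a p) efracD efrac_mull ?mul1r. Qed.

Lemma efrac_pmul2l d p a : (0 < d)%N -> efrac (d * p) (d * a) = efrac p a.
Proof.
move=> d_gt0; rewrite /efrac !natrM; congr expi.
have d_neq0 : (d%:R : R) != 0 by rewrite pnatr_eq0 -lt0n.
have [->|p_neq0] := eqVneq (p%:R : R) 0; first by rewrite !mulr0 !invr0 !mulr0.
by field; apply/andP.
Qed.

Lemma sqnorm_efrac p a : sqnorm (efrac p a) = 1.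
Proof. exact: sqnorm_expi. Qed.

Lemma efracJ p a : (efrac p a)^* * efrac p a = 1.
Proof. exact: expiJ. Qed.

Lemma efrac_neq1 p a : (0 < a < p)%N -> efrac p a != 1.
Proof.
case/andP=> a_gt0 a_lt_p; apply: expi_neq1.
have p_gt0 : (0 : R) < p%:R by rewrite ltr0n (ltn_trans a_gt0).
have tau_gt0 : (0 : R) < pi *+ 2 by rewrite mulrn_wgt0 ?pi_gt0.
apply/andP; split; first by rewrite divr_gt0 // mulr_gt0 // ltr0n.
by rewrite ltr_pdivrMr // ltr_pM2l // ltr_nat.
Qed.

End RootsOfUnity.

Section AdditiveCharacter.
Variables (R : realType) (p : nat).
Hypothesis p_gt1 : (1 < p)%N.
Implicit Types x y : 'Z_p.

Definition zchar x : R[i] := efrac R p (val x).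

Lemma zcharD x y : zchar (x + y) = zchar x * zchar y.
Proof.
rewrite /zchar -efracD -[in RHS](efrac_modn _ _ (ltnW p_gt1)) /=.
by congr (efrac _ _ (_ %% _)); exact: Zp_cast.
Qed.

Lemma zchar0 : zchar 0 = 1.
Proof. exact: efrac0. Qed.

Lemma sqnorm_zchar x : sqnorm (zchar x) = 1.
Proof. exact: sqnorm_efrac. Qed.

Lemma zcharN x : zchar (- x) = (zchar x)^*.
Proof.
rewrite -[LHS]mulr1 -(efracJ R p (val x)) -/(zchar x).
by rewrite mulrCA -zcharD addNr zchar0 mulr1.
Qed.

Lemma zcharB x y : zchar (x - y) = zchar x * (zchar y)^*.
Proof. by rewrite zcharD zcharN. Qed.

Lemma zchar_sum (I : finType) (F : I -> 'Z_p) :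
  zchar (\sum_i F i) = \prod_i zchar (F i).
Proof. by elim/big_rec2: _ => [|i b c _ <-]; rewrite ?zchar0 ?zcharD. Qed.

Lemma zchar_neq1 x : x != 0 -> zchar x != 1.
Proof.
move=> x_neq0; apply: efrac_neq1; rewrite lt0n -[val x]/(nat_of_ord x).
rewrite -[X in (_ < X)%N](Zp_cast p_gt1) ltn_ord andbT.
by apply: contra x_neq0 => /eqP x0; apply/eqP/val_inj.
Qed.

End AdditiveCharacter.

Section MatrixDot.
Variable F : pzRingType.

Definition mxdot m n (D E : 'M[F]_(m, n)) : F := \sum_a \sum_i D a i * E a i.

Lemma mxdotDl m n (D D' E : 'M[F]_(m, n)) : mxdot (D + D') E = mxdot D E + mxdot D' E.
Proof.
rewrite /mxdot -big_split; apply: eq_bigr => a _.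
by rewrite -big_split; apply: eq_bigr => i _; rewrite mxE mulrDl.
Qed.

Lemma mxdotBr m n (D E E' : 'M[F]_(m, n)) : mxdot D (E - E') = mxdot D E - mxdot D E'.
Proof.
rewrite /mxdot -sumrB; apply: eq_bigr => a _.
by rewrite -sumrB; apply: eq_bigr => i _; rewrite !mxE mulrBr.
Qed.

Lemma mxdot0r m n (D : 'M[F]_(m, n)) : mxdot D 0 = 0.
Proof. by rewrite /mxdot big1 // => a _; rewrite big1 // => i _; rewrite mxE mulr0. Qed.

Lemma mxdot_deltal m n a0 i0 (E : 'M[F]_(m, n)) : mxdot (delta_mx a0 i0) E = E a0 i0.
Proof.
rewrite /mxdot (bigD1 a0) //= (bigD1 i0) //= mxE !eqxx mul1r.
rewrite big1 ?addr0 => [|i /negbTE i_neq]; last by rewrite mxE eqxx i_neq mul0r.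
rewrite big1 ?addr0 // => a /negbTE a_neq; rewrite big1 // => i _.
by rewrite mxE a_neq mul0r.
Qed.

Lemma mxdot_rows m n (D E : 'M[F]_(m, n)) : mxdot D E = \sum_a mxdot (row a D) (row a E).
Proof.
apply: eq_bigr => a _; rewrite /mxdot big_ord1.
by apply: eq_bigr => i _; rewrite !mxE.
Qed.

End MatrixDot.

Lemma mxdot_trmx_mulmx (F : comPzRingType) n (c : 'rV[F]_n) (s : 'cV[F]_n) :
  mxdot s^T c = (c *m s) 0 0.
Proof.
rewrite /mxdot big_ord1 mxE; apply: eq_bigr => i _.
by rewrite mxE mulrC.
Qed.

Section ZpFourier.
Variables (R : realType) (p : nat).
Hypothesis p_gt1 : (1 < p)%N.

Lemma sum_zchar_mxdot m n (E : 'M['Z_p]_(m, n)) :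
  \sum_(D : 'M['Z_p]_(m, n)) zchar R (mxdot D E)
  = (E == 0)%:R * #|{: 'M['Z_p]_(m, n)}|%:R.
Proof.
have [->|E_neq0] := eqVneq E 0.
  by under eq_bigr => D _ do rewrite mxdot0r zchar0; rewrite sumr_const mul1r.
have [[a0 i0] /= Eai_neq0 | E0] :=
    pickP (fun ai : 'I_m * 'I_n => E ai.1 ai.2 != 0); last first.
  case/eqP: E_neq0; apply/matrixP => a i.
  by move/negbFE: (E0 (a, i)) => /eqP ->; rewrite mxE.
set S := \sum_D _.
(* Translating D by a matrix unit multiplies the sum by a nontrivial root of unity. *)
have S_invariant : S = zchar R (E a0 i0) * S.
  rewrite {1}/S (reindex_inj (addIr (delta_mx a0 i0))) mulr_sumr.
  by apply: eq_bigr => D _; rewrite mxdotDl mxdot_deltal (zcharD _ p_gt1) mulrC.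
have : (1 - zchar R (E a0 i0)) * S = 0 by rewrite mulrBl mul1r -S_invariant subrr.
move/eqP; rewrite mulf_eq0 subr_eq0 eq_sym (negbTE (zchar_neq1 _ p_gt1 Eai_neq0)) mul0r.
by move/eqP.
Qed.

Definition qft m n (D C : 'M['Z_p]_(m, n)) : R[i] :=
  (Num.sqrt #|{: 'M['Z_p]_(m, n)}|%:R)^-1%:C * zchar R (mxdot D C).

Lemma qft_unitary m n : unitary (@qft m n).
Proof.
move=> C C'; set N := #|{: 'M['Z_p]_(m, n)}|.
have N_gt0 : (0 : R) < N%:R := card_gt0_natr R 0.
transitivity ((N%:R^-1)%:C * \sum_D zchar R (mxdot D (C' - C))).
  rewrite mulr_sumr; apply: eq_bigr => D _.
  rewrite /qft conjc_realM mxdotBr (zcharB _ p_gt1).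
  by rewrite -[in RHS](sqr_sqrtr (ler0n R N)) -exprVn rmorphXn /=; ring.
rewrite sum_zchar_mxdot subr_eq0 [C' == C]eq_sym mulrCA.
case: (C == C'); rewrite ?mul0r ?mulr0 // mul1r.
by rewrite -(rmorph_nat (real_complex R)) -rmorphM mulVf ?gt_eqF.
Qed.

Lemma parseval_zchar m n (f : 'M['Z_p]_(m, n) -> R[i]) :
  \sum_D sqnorm (\sum_C zchar R (mxdot D C) * f C)
  = #|{: 'M['Z_p]_(m, n)}|%:R * \sum_C sqnorm (f C).
Proof.
set N := #|{: 'M['Z_p]_(m, n)}|.
have N_gt0 : (0 : R) < N%:R := card_gt0_natr R 0.
rewrite -(unitary_sqnorm f (@qft_unitary m n)) /apply_op /qft mulr_sumr.
apply: eq_bigr => D _; under [in RHS]eq_bigr => C _ do rewrite -mulrA.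
by rewrite -mulr_sumr sqnormM sqnormC exprVn sqr_sqrtr ?ltW // mulVKf ?gt_eqF.
Qed.

End ZpFourier.

Lemma sum_mulmx_col_unit (F : finUnitRingType) (V : nmodType) n (s : 'cV[F]_n) i0
    (phi : F -> V) :
  s i0 0 \is a GRing.unit ->
  (\sum_(c : 'rV[F]_n) phi ((c *m s) 0 0)) *+ #|F| = (\sum_y phi y) *+ #|{: 'rV[F]_n}|.
Proof.
move=> s_unit; set X := \sum_c _.
have shift t : X = \sum_(c : 'rV[F]_n) phi ((c *m s) 0 0 + t * s i0 0).
  rewrite {1}/X (reindex_inj (addIr (t *: delta_mx 0 i0))); apply: eq_bigr => c _.
  by rewrite mulmxDl -scalemxAl -rowE [fun_of_matrix (_ + _) _ _]mxE
     [fun_of_matrix (_ *: _) _ _]mxE [fun_of_matrix (row _ _) _ _]mxE.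
rewrite -sumr_const (eq_bigr _ (fun t _ => shift t)) exchange_big -sumr_const /=.
apply: eq_bigr => c _.
have shift_inj : injective (fun t => (c *m s) 0 0 + t * s i0 0).
  by move=> a b /addrI /(mulIr s_unit).
by rewrite [RHS](reindex_inj shift_inj).
Qed.

Section RowSums.
Variables (K : comPzSemiRingType) (T : finType) (m n : nat).

Lemma sum_prod_rows_cond (P : 'I_m -> pred 'rV[T]_n) (F : 'I_m -> 'rV[T]_n -> K) :
  \sum_(C : 'M[T]_(m, n) | [forall a, P a (row a C)]) \prod_a F a (row a C)
  = \prod_a \sum_(c | P a c) F a c.
Proof.
rewrite bigA_distr_big_dep /=.
pose mx_of (f : {ffun 'I_m -> 'rV[T]_n}) : 'M[T]_(m, n) := \matrix_a f a.
pose rows_of (C : 'M[T]_(m, n)) : {ffun 'I_m -> 'rV[T]_n} := [ffun a => row a C].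
have rows_ofK : cancel rows_of mx_of.
  by move=> C; apply/matrixP => a j; rewrite !mxE ffunE mxE.
have mx_ofK : cancel mx_of rows_of by move=> f; apply/ffunP => a; rewrite ffunE rowK.
rewrite (reindex mx_of) /=; last by exists rows_of => x _; [apply: mx_ofK | apply: rows_ofK].
apply: eq_big => [f|f _]; last by apply: eq_bigr => a _; rewrite rowK.
by apply/forallP/familyP => P_f a; move: (P_f a); rewrite rowK.
Qed.

Lemma sum_prod_rows (F : 'I_m -> 'rV[T]_n -> K) :
  \sum_(C : 'M[T]_(m, n)) \prod_a F a (row a C) = \prod_a \sum_c F a c.
Proof.
rewrite -(sum_prod_rows_cond (fun _ _ => true)).
by apply: eq_bigl => C; apply/esym/forallP.
Qed.

End RowSums.

Lemma sum_delta (V : pzSemiRingType) (T : finType) (x : T) (f : T -> V) :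
  \sum_y (y == x)%:R * f y = f x.
Proof.
rewrite (bigD1 x) //= eqxx mul1r big1 ?addr0 // => y /negbTE ->.
by rewrite mul0r.
Qed.

Lemma sum_pair (V : nmodType) (X Y : finType) (G : X * Y -> V) :
  \sum_xy G xy = \sum_x \sum_y G (x, y).
Proof. by rewrite pair_bigA; apply: eq_bigr => -[x y]. Qed.

Lemma sum_unit (V : nmodType) (f : unit -> V) : \sum_w f w = f tt.
Proof. by rewrite (big_pred1 tt) // => -[]. Qed.

Section TensorIdentity.
Variable R : realType.

Definition tensor_id (X Y : finType) (U : X -> X -> R[i]) (a b : X * Y) : R[i] :=
  U a.1 b.1 * (a.2 == b.2)%:R.

Lemma tensor_id_unitary (X Y : finType) (U : X -> X -> R[i]) :
  unitary U -> unitary (@tensor_id X Y U).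
Proof.
move=> U_unitary [x1 y1] [x2 y2]; rewrite sum_pair /tensor_id /=.
transitivity (\sum_x ((U x x1)^* * U x x2)
               * \sum_y ((y == y1)%:R * (y == y2)%:R : R[i])).
  apply: eq_bigr => x _; rewrite mulr_sumr; apply: eq_bigr => y _.
  by rewrite rmorphM /= conjc_nat; ring.
rewrite -mulr_suml U_unitary sum_delta xpair_eqE.
by case: (x1 == x2); rewrite ?mul1r ?mul0r.
Qed.

Lemma apply_op_tensor_id (X Y : finType) (U : X -> X -> R[i])
    (phi : qstate R (X * Y)%type) x y :
  apply_op (@tensor_id X Y U) phi (x, y) = apply_op U (fun x' => phi (x', y)) x.
Proof.
rewrite /apply_op sum_pair /tensor_id /=; apply: eq_bigr => x' _.
under eq_bigr => y' _ do rewrite -mulrA eq_sym.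
by rewrite -mulr_sumr sum_delta.
Qed.

End TensorIdentity.

Lemma sum_ord_modn (V : nmodType) (f : nat -> V) L Q : (0 < L)%N ->
  \sum_(v < L * Q) f (v %% L)%N = (\sum_(b < L) f b) *+ Q.
Proof.
move=> L_gt0; elim: Q => [|Q IH]; first by rewrite muln0 big_ord0.
rewrite mulnS big_split_ord /=.
under [X in _ + X]eq_bigr => v _ do rewrite modnDl.
rewrite IH mulrS; congr (_ + _).
by apply: eq_bigr => b _; rewrite modn_small.
Qed.

Section GeometricSum.
Variable R : realType.

Lemma sqnorm_efrac1_sub1 N : sqnorm (efrac R N 1 - 1) = 4 * sin (pi / N%:R) ^+ 2.
Proof.
by rewrite sqnorm_expi_sub1 mulr1 -[pi *+ 2]mulr_natr mulrAC mulfK ?pnatr_eq0.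
Qed.

(* Multiply by [e(1/(LQ)) - 1]: the sum telescopes to [e(1/Q) - 1]. *)
Lemma sqnorm_sum_efrac L Q : (0 < L)%N ->
  sqnorm (\sum_(b < L) efrac R (L * Q) b) * sin (pi / (L * Q)%:R) ^+ 2
  = sin (pi / Q%:R) ^+ 2.
Proof.
move=> L_gt0.
have telescope :
    efrac R Q 1 - 1 = (efrac R (L * Q) 1 - 1) * \sum_(b < L) efrac R (L * Q) b.
  rewrite -(efrac_pmul2l R Q 1 L_gt0) muln1 (efracX _ _ L) subrX1.
  by congr (_ * _); apply: eq_bigr => b _; rewrite -efracX.
have := congr1 (@sqnorm R) telescope.
rewrite sqnormM !sqnorm_efrac1_sub1; lra.
Qed.

End GeometricSum.

Section MostSignificantBits.
Variables (R : realType) (k B : nat).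
Hypotheses (B_gt0 : (0 < B)%N) (B_le_k : (B <= k)%N).

Local Notation q := (2 ^ k)%N.
Local Notation Q := (2 ^ B)%N.
Local Notation L := (2 ^ (k - B))%N.

Lemma expn2_split : q = (L * Q)%N.
Proof. by rewrite -expnD subnK. Qed.

Lemma q_gt1 : (1 < q)%N.
Proof. by rewrite -{1}(expn0 2) ltn_exp2l // (leq_trans B_gt0 B_le_k). Qed.

Lemma Q_gt1 : (1 < Q)%N.
Proof. by rewrite -{1}(expn0 2) ltn_exp2l. Qed.

Lemma msb_val (v : 'Z_q) : val (msb B v) = (val v %/ L)%N.
Proof.
rewrite /= (Zp_cast Q_gt1) modn_small // ltn_divLR ?expn_gt0 // mulnC -expn2_split.
by rewrite -[X in (_ < X)%N](Zp_cast q_gt1) ltn_ord.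
Qed.

Lemma zchar_msb_phase (y : 'Z_q) :
  zchar R y * zchar R (msb B (- y)) = (efrac R q (val (- y) %% L))^*.
Proof.
set v := val (- y).
have -> : zchar R y = (efrac R q v)^* by rewrite -[in LHS](opprK y) zcharN ?q_gt1.
have -> : zchar R (msb B (- y)) = efrac R q (L * (v %/ L)).
  by rewrite /zchar msb_val -(efrac_pmul2l _ _ _ (expn_gt0 2 (k - B))) -expn2_split.
rewrite {1}(divn_eq v L) [(v %/ L * L)%N]mulnC efracD conjcM.
by rewrite mulrAC efracJ mul1r.
Qed.

Lemma sum_zchar_msb :
  \sum_(y : 'Z_q) zchar R y * zchar R (msb B (- y))
  = (\sum_(b < L) efrac R q b)^* *+ Q.
Proof.
under eq_bigr => y _ do rewrite zchar_msb_phase.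
rewrite (reindex_inj oppr_inj); under eq_bigr => y _ do rewrite opprK.
rewrite rmorph_sum -(sum_ord_modn (fun b => (efrac R q b)^*) _ (expn_gt0 2 (k - B))).
rewrite -expn2_split -!(big_mkord xpredT (fun v => (efrac R q (v %% L))^*)).
by rewrite (Zp_cast q_gt1).
Qed.

Lemma sum_zchar_msb_ge :
  4 / pi ^+ 2 * q%:R ^+ 2
  <= sqnorm (\sum_(y : 'Z_q) zchar R y * zchar R (msb B (- y))).
Proof.
rewrite sum_zchar_msb sqnormMn sqnormJ.
set X := sqnorm _; pose sq : R := sin (pi / q%:R); pose sQ : R := sin (pi / Q%:R).
have geometric : X * sq ^+ 2 = sQ ^+ 2.
  by rewrite /X /sq expn2_split sqnorm_sum_efrac ?expn_gt0.
have pi_gt0 : 0 < pi :> R := pi_gt0 R.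
have q_gt0 : (0 : R) < q%:R by rewrite ltr0n expn_gt0.
have sQ_ge : 2 <= Q%:R * sQ := exp2n_sin_pi_div_ge2 R B_gt0.
have sq_ge0 : 0 <= sq.
  apply: sin_ge0_pi; rewrite divr_ge0 ?(ltW pi_gt0) ?(ltW q_gt0) //=.
  by rewrite ler_pdivrMr // ler_peMr ?(ltW pi_gt0) // ler1n expn_gt0.
have sq_le : q%:R * sq <= pi.
  by rewrite mulrC -ler_pdivlMr // sin_le // divr_ge0 ?ltW.
rewrite mulrAC ler_pdivrMr ?exprn_gt0 //.
apply: (le_trans (y := (Q%:R * sQ) ^+ 2 * q%:R ^+ 2)).
  by rewrite ler_wpM2r ?sqr_ge0 //; nra.
have -> : (Q%:R * sQ) ^+ 2 * q%:R ^+ 2 = X * Q%:R ^+ 2 * (q%:R * sq) ^+ 2.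
  by rewrite !exprMn -geometric; ring.
have qsq_ge0 : 0 <= q%:R * sq by rewrite mulr_ge0 // ltW.
rewrite ler_wpM2l ?mulr_ge0 ?sqnorm_ge0 ?sqr_ge0 //; nra.
Qed.

End MostSignificantBits.

Section Attack.
Variables (R : realType) (k B n mbar nbar : nat).
Hypotheses (B_gt0 : (0 < B)%N) (B_le_k : (B <= k)%N).
Variable cols : 'I_mbar -> 'I_nbar.

Local Notation Zq := 'Z_(2 ^ k).
Local Notation T := (basis k B mbar n nbar unit).
Local Notation chi := (zchar R).
Local Notation NC := (#|{: 'M[Zq]_(mbar, n)}|%:R : R).
Local Notation NZ := (#|{: 'M['Z_(2 ^ B)]_(mbar, nbar)}|%:R : R).
Local Notation Nrow := (#|{: 'rV[Zq]_n}|%:R : R).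

Let q_gt1 : (1 < 2 ^ k)%N := q_gt1 B_gt0 B_le_k.
Let Q_gt1 : (1 < 2 ^ B)%N := Q_gt1 B_gt0.

Lemma sum_basis (V : nmodType) (F : T -> V) :
  \sum_x F x = \sum_C1 \sum_C2 \sum_z F (C1, C2, z, tt).
Proof.
rewrite !sum_pair; apply: eq_bigr => C1 _; apply: eq_bigr => C2 _.
by apply: eq_bigr => z _; rewrite sum_unit.
Qed.

(* Each answer entry [(a, cols a)] holds the Fourier state on which adding [v] acts
   as multiplication by [chi v]. *)
Definition attack_state : qstate R T := fun x =>
  let: (C1, C2, z, _) := x in
  (C2 == 0)%:R * ((Num.sqrt (NC * NZ))^-1%:C * \prod_a chi (- z a (cols a))).

Definition attack_unitary : T -> T -> R[i] :=
  tensor_id (tensor_id (tensor_id (@qft R (2 ^ k) mbar n))).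

Definition attack_guess (x : T) (j : 'I_mbar) : 'cV[Zq]_n :=
  let: (D, _, _, _) := x in (row j D)^T.

Definition row_amplitude (S : 'M[Zq]_(n, nbar)) a (d : 'rV[Zq]_n) : R[i] :=
  \sum_(c : 'rV[Zq]_n) chi (mxdot d c) * chi (msb B (- (c *m col (cols a) S) 0 0)).

Lemma attack_state_unit : unit_vector attack_state.
Proof.
have NCZ_gt0 : 0 < NC * NZ by rewrite mulr_gt0 ?(card_gt0_natr R 0).
have amplitude (C2 : 'M[Zq]_(mbar, nbar)) (z : 'M['Z_(2 ^ B)]_(mbar, nbar)) :
    sqnorm ((C2 == 0)%:R * ((Num.sqrt (NC * NZ))^-1%:C
    * \prod_a chi (- z a (cols a)))) = (C2 == 0)%:R * (NC * NZ)^-1.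
  rewrite !sqnormM sqnorm_bool sqnormC sqnorm_prod big1 => [|a _]; last first.
    exact: sqnorm_zchar.
  by rewrite mulr1 exprVn sqr_sqrtr ?ltW.
rewrite /unit_vector sum_basis.
under eq_bigr => C1 _ do under eq_bigr => C2 _ do
  rewrite (eq_bigr _ (fun z _ => amplitude C2 z)) sumr_const -mulrnAr.
under eq_bigr => C1 _ do rewrite sum_delta.
by rewrite sumr_const -mulrnA mulnC -[LHS]mulr_natr natrM mulrC mulfV ?gt_eqF.
Qed.

Lemma unitary_attack_unitary : unitary attack_unitary.
Proof. by do 3!apply: tensor_id_unitary; apply: qft_unitary. Qed.

Lemma dec_entry (S : 'M[Zq]_(n, nbar)) (C : 'M[Zq]_(mbar, n)) a :
  frodo_dec B S C 0 a (cols a) = msb B (- (row a C *m col (cols a) S) 0 0).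
Proof.
rewrite /frodo_dec !mxE sub0r; congr (msb B (- _)).
by apply: eq_bigr => i _; rewrite !mxE.
Qed.

Lemma attack_amplitude (S : 'M[Zq]_(n, nbar)) D C2 z :
  apply_op attack_unitary (dec_oracle S attack_state) (D, C2, z, tt)
  = (C2 == 0)%:R * (((Num.sqrt NC)^-1 * (Num.sqrt (NC * NZ))^-1)%:C
      * \prod_a chi (- z a (cols a)) * \prod_a row_amplitude S a (row a D)).
Proof.
rewrite /attack_unitary !apply_op_tensor_id /apply_op /qft /dec_oracle /attack_state /=.
have [->|C2_neq0] := eqVneq C2 0; last first.
  by rewrite mul0r big1 // => C _; rewrite mul0r mulr0.
rewrite mul1r /row_amplitude -sum_prod_rows mulr_sumr; apply: eq_bigr => C _.
rewrite mxdot_rows zchar_sum ?q_gt1 // mul1r big_split /= rmorphM /=.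
have entry a : chi (- (z - frodo_dec B S C 0) a (cols a))
    = chi (msb B (- (row a C *m col (cols a) S) 0 0)) * chi (- z a (cols a)).
  by rewrite -dec_entry -zcharD //; congr (zchar R _); rewrite !mxE opprB.
rewrite (eq_bigr _ (fun a _ => entry a)) big_split /=; ring.
Qed.

Lemma sqnorm_attack_amplitude (S : 'M[Zq]_(n, nbar)) D C2 z :
  sqnorm (apply_op attack_unitary (dec_oracle S attack_state) (D, C2, z, tt))
  = (C2 == 0)%:R * ((NC ^+ 2 * NZ)^-1 * \prod_a sqnorm (row_amplitude S a (row a D))).
Proof.
rewrite attack_amplitude !sqnormM sqnorm_bool sqnormC !sqnorm_prod.
rewrite [X in _ * X * _]big1 => [|a _]; last by rewrite sqnorm_zchar.
rewrite mulr1 exprMn !exprVn !sqr_sqrtr ?mulr_ge0 //.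
by congr (_ * (_ * _)); rewrite -invfM mulrA -expr2.
Qed.

Lemma meas_prob_attack_rows (S : 'M[Zq]_(n, nbar)) j :
  meas_prob (apply_op attack_unitary (dec_oracle S attack_state))
            (fun x => attack_guess x j == col (cols j) S)
  = (NC ^+ 2)^-1 * \sum_(D | (row j D)^T == col (cols j) S)
                     \prod_a sqnorm (row_amplitude S a (row a D)).
Proof.
rewrite /meas_prob /attack_guess big_mkcond sum_basis.
rewrite [X in _ = _ * X]big_mkcond mulr_sumr.
apply: eq_bigr => D _ /=; case: ((row j D)^T == col (cols j) S); last first.
  by rewrite mulr0 big1 // => C2 _; rewrite big1.
under eq_bigr => C2 _ do under eq_bigr => z _ do rewrite sqnorm_attack_amplitude.
under eq_bigr => C2 _ do rewrite sumr_const -mulrnAr.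
rewrite sum_delta -mulrnAl; congr (_ * _).
by rewrite -mulr_natr invfM -mulrA mulVf ?mulr1 // gt_eqF ?(card_gt0_natr R 0).
Qed.

Lemma sum_sqnorm_row_amplitude (S : 'M[Zq]_(n, nbar)) a :
  \sum_d sqnorm (row_amplitude S a d) = Nrow ^+ 2.
Proof.
rewrite (parseval_zchar q_gt1); under eq_bigr => c _ do rewrite sqnorm_zchar.
by rewrite sumr_const expr2.
Qed.

Lemma card_mx_rows : NC = Nrow ^+ mbar.
Proof. by rewrite !card_mx mul1n mulnC expnM natrX. Qed.

Lemma meas_prob_attack (S : 'M[Zq]_(n, nbar)) j :
  meas_prob (apply_op attack_unitary (dec_oracle S attack_state))
            (fun x => attack_guess x j == col (cols j) S)
  = sqnorm (row_amplitude S j (col (cols j) S)^T) / Nrow ^+ 2.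
Proof.
rewrite meas_prob_attack_rows; set s := col (cols j) S.
rewrite (eq_bigl (fun D => [forall a, (a != j) || ((row a D)^T == s)])) => [|D]; last first.
  apply/idP/forallP => [guess_ok a | /(_ j)]; last by rewrite eqxx.
  by case: eqVneq => // ->.
rewrite (sum_prod_rows_cond (fun a d => (a != j) || (d^T == s))
  (fun a d => sqnorm (row_amplitude S a d))) (bigD1 j) //= eqxx /=.
rewrite (big_pred1 s^T) => [|d]; last by rewrite /= (can2_eq trmxK trmxK).
under eq_bigr => a a_neq_j do rewrite a_neq_j sum_sqnorm_row_amplitude.
have mbar_gt0 : (0 < mbar)%N := leq_ltn_trans (leq0n j) (ltn_ord j).
have Nrow_neq0 : Nrow != 0 by rewrite gt_eqF ?(card_gt0_natr R 0).
rewrite prodr_const cardC1 card_ord card_mx_rows -exprM mulnC exprM.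
rewrite -(prednK mbar_gt0) exprS prednK //.
by field; rewrite Nrow_neq0 !expf_neq0.
Qed.

Lemma row_amplitude_ge (S : 'M[Zq]_(n, nbar)) j :
  (exists i, odd (val (S i (cols j)))) ->
  4 / pi ^+ 2 * Nrow ^+ 2 <= sqnorm (row_amplitude S j (col (cols j) S)^T).
Proof.
case=> i0 odd_entry; set s := col (cols j) S.
have s_unit : s i0 0 \is a GRing.unit.
  by rewrite mxE -[S i0 _]natr_Zp unitZpE // coprimeXl // coprime2n.
have := sum_mulmx_col_unit (fun y => chi y * chi (msb B (- y))) s_unit.
rewrite card_ord [X in _ *+ X = _](Zp_cast q_gt1).
move/(congr1 (@sqnorm R)); rewrite !sqnormMn => amplitudes.
rewrite /row_amplitude; under eq_bigr => c _ do rewrite mxdot_trmx_mulmx.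
have q_gt0 : (0 : R) < (2 ^ k)%:R ^+ 2 by rewrite exprn_gt0 // ltr0n expn_gt0.
rewrite -(ler_pM2r q_gt0) amplitudes.
have := ler_wpM2r (sqr_ge0 Nrow) (sum_zchar_msb_ge R B_gt0 B_le_k); lra.
Qed.

End Attack.

Theorem theorem10 (R : realType) (k B n mbar nbar : nat) :
  (1 <= B)%N -> (B <= k)%N ->
  forall cols : 'I_mbar -> 'I_nbar, injective cols ->
  exists (W : finType) (psi : qstate R (basis k B mbar n nbar W))
         (V : basis k B mbar n nbar W -> basis k B mbar n nbar W -> R[i])
         (out : basis k B mbar n nbar W -> 'I_mbar -> 'cV['Z_(2^k)]_n),
    unit_vector psi /\ unitary V /\
    forall (S : 'M['Z_(2^k)]_(n, nbar)) (j : 'I_mbar),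
      (exists i : 'I_n, odd (val (S i (cols j)))) ->
      4 / pi ^+ 2 <=
        meas_prob (apply_op V (dec_oracle S psi))
                  (fun x => out x j == col (cols j) S).
Proof.
(* [cols] need not be injective: the answer entry read for row [a] is [(a, cols a)]. *)
move=> B_gt0 B_le_k cols _.
exists unit, (attack_state R cols), (@attack_unitary R k B n mbar nbar),
  (@attack_guess k B n mbar nbar).
split; first exact: attack_state_unit.
split; first exact: unitary_attack_unitary.
move=> S j odd_entry; rewrite (meas_prob_attack R B_gt0 B_le_k).
rewrite ler_pdivlMr ?exprn_gt0 ?(card_gt0_natr R 0) //.
exact: row_amplitude_ge.
Qed.
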